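(* Let $r\in\mathbb{N}$ with $r\ge2$, $v\in\mathbb{YF}^r$ and $u\in\mathbb{YF}$. Then $$\sum_{w\in S_r(u)} d_r(w,v)=r^{d(v)-d(u)}\, d_1(u,s(v)),$$ where $S_r(u)=\{w\in\mathbb{YF}^r: s(w)=u\}$.
   Context: Fix $r\in\mathbb{N}$. Words and statistics. Consider finite words over $\{1_1,\dots,1_r,2\}$. A letter $1_i$ is a one with digit value $1$; $2$ is a two with digit value $2$. $|x|$ is the sum of digit values, $d(x)$ the number of twos. The graph $\mathbb{YF}^r$. It is the graded graph on all finite words, graded by $|\cdot|$. From $x$ there is a downward edge to every word obtained by one of two operations: (i) delete the leftmost one; (ii) replace a $2$ lying left of the leftmost one (any $2$ if there are no ones) by $1_i$, with arbitrary $i$. $\mathbb{YF}=\mathbb{YF}^1$ (with $1:=1_1$), the Young–Fibonacci graph. $s:\mathbb{YF}^r\to\mathbb{YF}$ replaces every $1_i$ by $1$. Path counts. $d_r(x,y)$ is the number of downward paths $y=y_n\to\dots\to y_m=x$ in $\mathbb{YF}^r$ with $|y_i|=i$ ($0$ if none); $d_1$ is the count in $\mathbb{YF}$. *)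

From mathcomp Require Import all_boot all_order all_algebra.
Set Implicit Arguments. Unset Strict Implicit. Unset Printing Implicit Defensive.

(* Letters of YF^r: [Some i] is the one 1_i (i : 'I_r), [None] is the two 2. *)
Definition letter (r : nat) := option 'I_r.
Definition word (r : nat) := seq (letter r).

Definition is_one r (a : letter r) : bool := if a is Some _ then true else false.

Definition digit r (a : letter r) : nat := if a is Some _ then 1 else 2.

Definition rank r (x : word r) : nat := sumn (map (@digit r) x).

Definition ntwos r (x : word r) : nat := count (fun a : letter r => ~~ is_one a) x.

Definition delete_at (T : Type) (k : nat) (s : seq T) : seq T := take k s ++ drop k.+1 s.

(* Downward neighbours of x in YF^r.  Let k be the position of the leftmost one
   (k = size x if there is none).  Every letter at a position j < k is a two.
   (i) delete the leftmost one;
   (ii) replace a two at a position j < k (i.e. left of the leftmost one, or any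
        two if there are no ones) by 1_i, for any i. *)
Definition children r (x : word r) : seq (word r) :=
  let k := find (@is_one r) x in
  undup ((if k < size x then [:: delete_at k x] else [::]) ++
         [seq set_nth None x j (Some i) | j <- iota 0 k, i <- enum 'I_r]).

Fixpoint npaths r (n : nat) (x y : word r) : nat :=
  match n with
  | 0 => (x == y : nat)
  | n'.+1 => sumn [seq npaths n' x c | c <- children y]
  end.

(* d_r(x, y): number of downward paths y = y_n -> ... -> y_m = x with |y_i| = i. *)
Definition dpaths r (x y : word r) : nat :=
  if rank x <= rank y then npaths (rank y - rank x) x y else 0.

(* s : YF^r -> YF, replacing every 1_i by 1 (= 1_1, encoded as ord0 : 'I_1). *)
Definition s_letter r (a : letter r) : letter 1 :=
  if a is Some _ then Some ord0 else None.
Definition s_word r (x : word r) : word 1 := map (@s_letter r) x.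

From mathcomp Require Import all_boot all_order all_algebra.
From mathcomp Require Import zify.
Import GRing.Theory.

Set Implicit Arguments.
Unset Strict Implicit.
Unset Printing Implicit Defensive.

(* For paths of every length n, [r ^ d(u)] times the number of length-n paths
   from [v] down to the lifts of [u] equals [r ^ d(v)] times the number of
   length-n paths from [s v] down to [u].  By induction on n: the children of [v]
   lie over the children of [s v]; deleting the leftmost one commutes with [s]
   and keeps the number of twos, whereas the [r] ways of turning a two into some
   [1_i] all lie over the single way of turning it into [1] and lose one two, so
   the factor [r] is absorbed by the power of [r].  When [d(u) > d(v)] both sides
   of the theorem vanish, since moving down never creates a two. *)

Local Notation first_one x := (find (@is_one _) x).

Lemma size_delete_at (T : Type) k (s : seq T) :
  k < size s -> size (delete_at k s) = (size s).-1.
Proof. by move=> ks; rewrite size_cat size_take ks size_drop; lia. Qed.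

Section Children.
Variable r : nat.
Implicit Types x y : word r.

Lemma nth_before_first_one x j : j < first_one x -> nth None x j = None.
Proof. by move=> /(before_find None); case: (nth None x j). Qed.

Lemma size_set_nth_before x j a :
  j < first_one x -> size (set_nth None x j a) = size x.
Proof.
by move=> jk; rewrite size_set_nth; apply/maxn_idPr/(leq_trans jk (find_size _ _)).
Qed.

Lemma set_nth_before_inj x j1 j2 (i1 i2 : 'I_r) :
    j1 < first_one x -> j2 < first_one x ->
  set_nth None x j1 (Some i1) = set_nth None x j2 (Some i2) -> (j1, i1) = (j2, i2).
Proof.
move=> j1k j2k /(congr1 (nth None ^~ j1)); rewrite !nth_set_nth /= eqxx.
by case: eqP => [<- [->] | _]; rewrite ?nth_before_first_one.
Qed.

Lemma undup_children x :
  children x =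
  (if first_one x < size x then [:: delete_at (first_one x) x] else [::]) ++
  [seq set_nth None x j (Some i) | j <- iota 0 (first_one x), i <- enum 'I_r].
Proof.
rewrite /children undup_id // cat_uniq.
set D := if _ then _ else _; set M := [seq _ | j <- _, i <- _].
have szM c : c \in M -> size c = size x.
  case/allpairsP=> -[j i] /= [+ _ ->]; rewrite mem_iota => /andP[_ jk].
  exact: size_set_nth_before.
apply/and3P; split; first by rewrite /D; case: ifP.
  apply/hasPn => c /szM szc; rewrite /D; case: ifP => // kx; rewrite inE.
  apply/eqP => cD; move: szc; rewrite cD size_delete_at // => /eqP.
  by rewrite eqn_leq leq_pred leqNgt ltn_predL (leq_ltn_trans _ kx).
rewrite /M; apply: (@allpairs_uniq _ _ _ (fun j (i : 'I_r) => set_nth None x j (Some i))).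
- exact: iota_uniq.
- exact: enum_uniq.
move=> -[j1 i1] -[j2 i2] /allpairsP[[j1' i1'] /= [+ _ [-> ->]]].
move=> + /allpairsP[[j2' i2'] /= [+ _ [-> ->]]]; rewrite !mem_iota.
by move=> /andP[_ j1k] /andP[_ j2k]; apply: set_nth_before_inj.
Qed.

Lemma big_children x (F : word r -> nat) :
  \sum_(c <- children x) F c =
  (if first_one x < size x then F (delete_at (first_one x) x) else 0) +
  \sum_(j <- iota 0 (first_one x)) \sum_(i <- enum 'I_r) F (set_nth None x j (Some i)).
Proof.
rewrite undup_children big_cat big_allpairs_dep.
by case: ifP => _; rewrite ?big_seq1 ?big_nil.
Qed.

Lemma npathsS n x y : npaths n.+1 x y = \sum_(c <- children y) npaths n x c.
Proof. by rewrite /= sumnE big_map. Qed.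

Lemma ntwos_delete_first_one x :
  first_one x < size x -> ntwos (delete_at (first_one x) x) = ntwos x.
Proof.
move=> kx; have hx : has (@is_one r) x by rewrite has_find.
have := nth_find None hx; set k := first_one x => xk.
rewrite /ntwos /delete_at -[in RHS](cat_take_drop k x) (drop_nth None kx) !count_cat /=.
by case: (nth None x k) xk.
Qed.

Lemma ntwos_gt0_before x j : j < first_one x -> 0 < ntwos x.
Proof.
move=> jk; rewrite /ntwos -has_count; apply/(has_nthP None).
by exists j; [exact: leq_trans jk (find_size _ _) | rewrite nth_before_first_one].
Qed.

Lemma ntwos_set_nth_before x j i :
  j < first_one x -> ntwos (set_nth None x j (Some i)) = (ntwos x).-1.
Proof.
move=> jk; rewrite {1}/ntwos count_set_nth_ltn ?(leq_trans jk (find_size _ _)) //.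
by rewrite nth_before_first_one //= addn0 subn1.
Qed.

Lemma npaths_ntwos_lt n x y : ntwos y < ntwos x -> npaths n x y = 0.
Proof.
elim: n y => [|n IH] y lt_yx.
  by rewrite /=; case: (x =P y) lt_yx => [->|]; rewrite ?ltnn.
rewrite npathsS big_children big1_seq ?addn0.
  by case: ifP => // ky; rewrite IH ?ntwos_delete_first_one.
move=> j; rewrite mem_iota => /andP[_ jk]; apply: big1 => i _; apply: IH.
by rewrite ntwos_set_nth_before // (leq_ltn_trans (leq_pred _) lt_yx).
Qed.

End Children.

Section Forget.
Variable r : nat.
Implicit Types x : word r.

Lemma first_one_s_word x : first_one (s_word x) = first_one x.
Proof. by rewrite find_map; apply: eq_find => -[]. Qed.

Lemma ntwos_s_word x : ntwos (s_word x) = ntwos x.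
Proof. by rewrite /ntwos count_map; apply: eq_count => -[]. Qed.

Lemma rank_s_word x : rank (s_word x) = rank x.
Proof. by rewrite /rank /s_word -map_comp; congr sumn; apply: eq_map => -[]. Qed.

Lemma s_word_delete_at k x : s_word (delete_at k x) = delete_at k (s_word x).
Proof. by rewrite /s_word /delete_at map_cat map_take map_drop. Qed.

Lemma s_word_set_nth x j i : j < size x ->
  s_word (set_nth None x j (Some i)) = set_nth None (s_word x) j (Some ord0).
Proof.
by move=> jx; rewrite !set_nthE size_map jx /s_word map_cat map_take /= map_drop.
Qed.

End Forget.

Lemma sum_lifts_eq r (u : word 1) (v : word r) :
  \sum_(w : (size u).-tuple (letter r) | s_word w == u) (tval w == v : nat)
  = (s_word v == u).
Proof.
have [svu | nvu] := eqVneq (s_word v) u; last first.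
  by apply: big1 => w /eqP swu; case: (tval w =P v) => // wv; rewrite -wv swu eqxx in nvu.
have szv : size v == size u by rewrite -svu size_map.
rewrite -big_mkcondr (big_pred1 (Tuple szv)) // => w /=.
by rewrite -val_eqE /=; case: (tval w =P v) => [->|]; rewrite ?svu ?eqxx ?andbF.
Qed.

Lemma sum_set_nth_before r n (u : word 1) (v : word r) j : j < first_one v ->
  \sum_(i <- enum 'I_r) r ^ ntwos (set_nth None v j (Some i)) *
                        npaths n u (s_word (set_nth None v j (Some i)))
  = r ^ ntwos v * \sum_(i <- enum 'I_1) npaths n u (set_nth None (s_word v) j (Some i)).
Proof.
move=> jk; have jv := leq_trans jk (find_size _ _).
under eq_bigr do rewrite ntwos_set_nth_before // s_word_set_nth //.
rewrite !big_enum /= big_ord1 sum_nat_const card_ord mulnA -expnS.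
by rewrite prednK // (ntwos_gt0_before jk).
Qed.

Lemma sum_lifts_npaths r n (u : word 1) (v : word r) :
  (\sum_(w : (size u).-tuple (letter r) | s_word w == u) npaths n w v) * r ^ ntwos u
  = r ^ ntwos v * npaths n u (s_word v).
Proof.
elim: n v => [|n IH] v.
  rewrite sum_lifts_eq /= eq_sym.
  by case: eqP => [->|_]; rewrite ?ntwos_s_word ?muln0 // mulnC.
under eq_bigr do rewrite npathsS.
rewrite npathsS exchange_big big_distrl /=; under eq_bigr do rewrite IH.
rewrite !big_children first_one_s_word size_map mulnDr big_distrr /=.
congr (_ + _).
  by case: ifP => kv; rewrite ?muln0 // ntwos_delete_first_one // s_word_delete_at.
by apply: eq_big_seq => j; rewrite mem_iota => /andP[_ jk]; apply: sum_set_nth_before.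
Qed.

Local Open Scope ring_scope.

Theorem mainTheorem8 (r : nat) (hr : (2 <= r)%N) (v : word r) (u : word 1) :
  ((\sum_(w : (size u).-tuple (letter r) | s_word (tval w) == u)
      dpaths (tval w) v)%N)%:R
  = ((r%:R : rat) ^ ((ntwos v)%:Z - (ntwos u)%:Z)) * (dpaths u (s_word v))%:R.
Proof.
rewrite /dpaths rank_s_word.
under eq_bigr => w /eqP sw do rewrite -(rank_s_word (tval w)) sw.
have [_ | _] := leqP (rank u) (rank v); last by rewrite big1 // mulr0.
have := sum_lifts_npaths (rank v - rank u) u v.
set S := (\sum_(w | _) _)%N; set N := npaths _ u _ => key.
have ru_gt0 : (0 < r ^ ntwos u)%N by rewrite expn_gt0 (leq_trans _ hr).
have [le_d | lt_d] := leqP (ntwos u) (ntwos v).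
  have -> : S = (r ^ (ntwos v - ntwos u) * N)%N.
    by apply/eqP; rewrite -(eqn_pmul2r ru_gt0) key mulnAC -expnD subnK.
  by rewrite subzn // natrM natrX.
have N0 : N = 0%N by rewrite /N npaths_ntwos_lt // ntwos_s_word.
have S0 : S = 0%N by apply/eqP; rewrite -(eqn_pmul2r ru_gt0) key N0 muln0.
by rewrite S0 N0 mulr0.
Qed.
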